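(* Let $H_1,H_2,H_3,H_4$ be the following graphs. $H_1$: vertices $v_1,\dots,v_5$, edges $v_1v_2,v_2v_3,v_3v_4,v_4v_5,v_5v_1,v_2v_4,v_3v_5$. $H_2$: vertices $v_1,\dots,v_6$, edges $v_1v_2,v_2v_3,v_3v_4,v_4v_5,v_5v_6,v_6v_1,v_2v_5,v_3v_6$. $H_3$: vertices $v_1,\dots,v_7$, edges $v_1v_2,\dots,v_6v_7,v_7v_1$ (the $7$-cycle) together with $v_2v_5,v_3v_6,v_4v_7$. $H_4$: vertices $v_1,\dots,v_6$, edges $v_1v_2,v_2v_3,v_3v_4,v_4v_5,v_5v_6,v_6v_1,v_2v_6,v_3v_5$. Let $G$ be a cubic graph containing $H_i$ as an induced subgraph, for some $1\le i\le 4$. Then any minimum $2$-conversion set of $G$ contains exactly $2$ vertices from each copy of $H_i$.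
   Context: For a graph $G=(V,E)$ and a set $S_0\subseteq V$, the irreversible $2$-threshold conversion process is defined by: for $t=1,2,\dots$, $S_t$ is obtained from $S_{t-1}$ by adjoining all vertices having at least $2$ neighbours in $S_{t-1}$. $S_0$ is a $2$-conversion set if $S_t=V$ for some $t\ge 0$; a minimum $2$-conversion set is one of smallest size. *)

From mathcomp Require Import all_boot.
Set Implicit Arguments. Unset Strict Implicit. Unset Printing Implicit Defensive.

Definition simple_graph (T : finType) (e : rel T) : Prop :=
  symmetric e /\ irreflexive e.

Definition cubic (T : finType) (e : rel T) : Prop :=
  forall v : T, #|[set u | e v u]| = 3.

Definition conv_step (T : finType) (e : rel T) (S : {set T}) : {set T} :=
  S :|: [set v | 2 <= #|[set u in S | e v u]|].

Definition conv_iter (T : finType) (e : rel T) (t : nat) (S0 : {set T}) :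
  {set T} := iter t (conv_step e) S0.

Definition is_conversion_set (T : finType) (e : rel T) (S0 : {set T}) : Prop :=
  exists t : nat, conv_iter e t S0 = [set: T].

Definition is_min_conversion_set (T : finType) (e : rel T) (S0 : {set T})
  : Prop :=
  is_conversion_set e S0 /\
  forall S : {set T}, is_conversion_set e S -> #|S0| <= #|S|.

(* The graphs H_1..H_4: number of vertices and edge lists (vertices 1-indexed
   as in the paper, v_k labelled k). *)
Definition Hn (i : nat) : nat :=
  match i with 1 => 5 | 2 => 6 | 3 => 7 | 4 => 6 | _ => 0 end.

Definition Hedges (i : nat) : seq (nat * nat) :=
  match i with
  | 1 => [:: (1,2); (2,3); (3,4); (4,5); (5,1); (2,4); (3,5)]
  | 2 => [:: (1,2); (2,3); (3,4); (4,5); (5,6); (6,1); (2,5); (3,6)]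
  | 3 => [:: (1,2); (2,3); (3,4); (4,5); (5,6); (6,7); (7,1);
             (2,5); (3,6); (4,7)]
  | 4 => [:: (1,2); (2,3); (3,4); (4,5); (5,6); (6,1); (2,6); (3,5)]
  | _ => [::]
  end.

(* adjacency of H_i on 'I_(Hn i): ordinal a stands for v_(a+1). *)
Definition Hadj (i : nat) (a b : 'I_(Hn i)) : bool :=
  ((a.+1, b.+1) \in Hedges i) || ((b.+1, a.+1) \in Hedges i).

Definition induced_copy (i : nat) (T : finType) (e : rel T)
  (f : 'I_(Hn i) -> T) : Prop :=
  injective f /\ forall a b : 'I_(Hn i), e (f a) (f b) = Hadj a b.

(* In a cubic graph, if every vertex of a set U disjoint from S has two neighbours in
   U, then it has at most one outside U, so the process never enters U; conversely
   the vertices never reached form such a set.  Thus S is a 2-conversion set iff no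
   nonempty set disjoint from S induces minimum degree at least 2.  Every H_i minus
   any single vertex still contains such a set, so a conversion set meets each copy
   of H_i at least twice.  On the other hand each vertex v of the copy has only
   3 - deg_H(v) edges leaving it, and for a suitable pair of vertices of H_i the
   remaining vertices can be peeled off one at a time, each having fewer than two
   possible neighbours in what is left; hence S can swap its part inside the copy
   for that pair and stay a conversion set, and a minimum one meets the copy at
   most twice. *)

From mathcomp Require Import all_boot zify.
Set Implicit Arguments. Unset Strict Implicit. Unset Printing Implicit Defensive.

Definition nbrs (T : finType) (e : rel T) (U : {set T}) (v : T) : {set T} :=
  [set u in U | e v u].

Definition min_deg2 (T : finType) (e : rel T) (U : {set T}) : Prop :=
  forall v, v \in U -> 2 <= #|nbrs e U v|.

(* The trace on an induced copy of a [min_deg2] set of a cubic host graph: besides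
   its neighbours in [C], each [v] may use the [3 - deg v] host edges leaving the copy. *)
Definition cubic_min_deg2 (T : finType) (e : rel T) (C : {set T}) : Prop :=
  forall v, v \in C -> 2 <= #|nbrs e C v| + (3 - #|[set u | e v u]|).

Section CubicConversion.

Variables (T : finType) (e : rel T).
Hypothesis e_cubic : cubic e.
Implicit Types S U X : {set T}.

Lemma conv_step_mono : {homo conv_step e : X Y / X \subset Y}.
Proof.
move=> X Y sXY; apply/subsetP => v; rewrite !inE => /orP[vX | nbX].
  by rewrite (subsetP sXY).
apply/orP; right; apply: leq_trans nbX _; apply/subset_leq_card.
by apply/subsetP => u; rewrite !inE => /andP[/(subsetP sXY) -> ->].
Qed.

Lemma subset_conv_iter t S : S \subset conv_iter e t S.
Proof.
elim: t => [|t IHt]; first exact: subxx.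
by apply: subset_trans IHt _; apply: subsetUl.
Qed.

Lemma card_nbrs_setC X v : #|nbrs e X v| + #|nbrs e (~: X) v| = 3.
Proof.
rewrite -(e_cubic v) -(cardsID X [set u | e v u]).
by congr (_ + _); apply: eq_card => u; rewrite !inE andbC.
Qed.

Lemma disjoint_conv_iter S U t :
  [disjoint U & S] -> min_deg2 e U -> [disjoint U & conv_iter e t S].
Proof.
move=> dUS cU; elim: t => [//|t IHt].
rewrite disjoints_subset; apply/subsetP => v vU.
rewrite /conv_iter iterS -/(conv_iter e t S) !inE (disjointFr IHt vU) -ltnNge.
have sub : nbrs e (conv_iter e t S) v \subset nbrs e (~: U) v.
  apply/subsetP => u; rewrite !inE => /andP[uX ->]; rewrite andbT.
  by apply: contraL uX => uU; rewrite (disjointFr IHt uU).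
have := subset_leq_card sub; have := card_nbrs_setC U v; have := cU v vU.
rewrite /nbrs; lia.
Qed.

Lemma conversion_setP S :
  is_conversion_set e S <->
  forall U, [disjoint U & S] -> min_deg2 e U -> U = set0.
Proof.
split=> [[t convS] U dUS cU | noCore].
  have := disjoint_conv_iter t dUS cU; rewrite convS disjoints_subset setCT.
  by rewrite subset0 => /eqP.
pose F X := S :|: conv_step e X.
have F_mono : {homo F : X Y / X \subset Y}.
  by move=> X Y /conv_step_mono; apply: setUS.
have iterF_sub k : iter k F set0 \subset conv_iter e k S.
  elim: k => [|k IHk]; first exact: sub0set.
  rewrite iterS /conv_iter iterS -/(conv_iter e k S) subUset conv_step_mono //.
  by rewrite andbT; exact: subset_conv_iter k.+1 S.
(* [fixset F] is the closure of [S] under [conv_step], reached after #|T| steps. *)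
set C := fixset F; have FC : F C = C := fixsetK F_mono.
have C_full : ~: C = set0.
  apply: noCore.
    by rewrite disjoint_sym disjoints_subset setCK -FC subsetUl.
  move=> v; rewrite inE => vC; have : v \notin F C by rewrite FC.
  rewrite !inE !negb_or => /and3P[_ _]; rewrite -ltnNge.
  by have := card_nbrs_setC C v; rewrite /nbrs; lia.
exists #|T|; apply/eqP; rewrite eqEsubset subsetT /=.
by apply: subset_trans (iterF_sub #|T|); rewrite -setCS C_full sub0set.
Qed.

End CubicConversion.

Section InducedCopy.

Variables (T : finType) (e : rel T) (n : nat) (h : rel 'I_n) (f : 'I_n -> T).
Hypotheses (e_cubic : cubic e) (f_inj : injective f).
Hypothesis f_induced : forall a b, e (f a) (f b) = h a b.
Implicit Types (S U : {set T}) (A C W : {set 'I_n}).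

Let F := [set f a | a : 'I_n].

Lemma min_deg2_imset W : min_deg2 h W -> min_deg2 e (f @: W).
Proof.
move=> cW _ /imsetP[a aW ->]; apply: leq_trans (cW a aW) _.
rewrite -(card_imset _ f_inj); apply/subset_leq_card/subsetP => u /imsetP[b].
by rewrite !inE => /andP[bW hab] ->; rewrite imset_f // f_induced.
Qed.

Lemma cubic_min_deg2_preimset U : min_deg2 e U -> cubic_min_deg2 h (f @^-1: U).
Proof.
move=> cU a; rewrite inE => faU.
have nbrsF : nbrs e F (f a) = f @: [set b | h a b].
  apply/setP => u; rewrite !inE; apply/andP/imsetP => [[/imsetP[b _ ->]] | [b]].
    by rewrite f_induced => hab; exists b; rewrite ?inE.
  by rewrite inE => hab ->; rewrite imset_f // f_induced.
have nbrsU : nbrs e U (f a) \subset f @: nbrs h (f @^-1: U) a :|: nbrs e (~: F) (f a).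
  apply/subsetP => u; rewrite !inE => /andP[uU eau].
  case: (boolP (u \in F)) => [/imsetP[b _ ub] | _]; last by rewrite eau orbT.
  by rewrite ub in uU eau *; rewrite imset_f // !inE uU -f_induced.
have := card_nbrs_setC e_cubic F (f a); rewrite nbrsF !card_imset //.
have := leq_trans (subset_leq_card nbrsU) (leq_card_setU _ _).
rewrite card_imset //; have := cU _ faU; lia.
Qed.

Lemma card_conversion_copy_gt k S :
  (forall A, #|A| <= k -> exists2 W, W != set0 & min_deg2 h W /\ [disjoint W & A]) ->
  is_conversion_set e S -> k < #|S :&: F|.
Proof.
move=> cores convS; rewrite ltnNge; apply/negP => SF_le_k.
have [|W W_neq0 [cW dWS]] := cores (f @^-1: S).
  rewrite -(card_imset _ f_inj); apply: leq_trans SF_le_k.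
  apply/subset_leq_card/subsetP => u /imsetP[a]; rewrite inE => faS ->.
  by rewrite inE faS imset_f.
have dfWS : [disjoint f @: W & S].
  rewrite disjoints_subset; apply/subsetP => u /imsetP[a aW ->].
  by rewrite inE; apply: contraFN (disjointFr dWS aW) => faS; rewrite inE.
have /eqP := (conversion_setP e_cubic S).1 convS _ dfWS (min_deg2_imset cW).
by rewrite imset_eq0 (negbTE W_neq0).
Qed.

Lemma card_min_conversion_copy_le A S :
  (forall C, [disjoint C & A] -> cubic_min_deg2 h C -> C = set0) ->
  is_min_conversion_set e S -> #|S :&: F| <= #|A|.
Proof.
move=> noTrace [convS minS].
set S' := (S :\: F) :|: f @: A.
have convS' : is_conversion_set e S'.
  apply/(conversion_setP e_cubic) => U dUS' cU.
  have preU0 : f @^-1: U = set0.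
    apply: noTrace (cubic_min_deg2_preimset cU).
    rewrite disjoints_subset; apply/subsetP => a; rewrite !inE => faU.
    by apply: contraFN (disjointFr dUS' faU) => aA; rewrite inE imset_f ?orbT.
  have dUS : [disjoint U & S].
    rewrite disjoints_subset; apply/subsetP => u uU; rewrite inE.
    case: (boolP (u \in F)) => [/imsetP[a _ ua] | uF].
      by have := in_set0 a; rewrite -preU0 inE -ua uU.
    by apply: contraFN (disjointFr dUS' uU) => uS; rewrite /S' !inE uF uS.
  exact: (conversion_setP e_cubic S).1 convS U dUS cU.
rewrite -(leq_add2r #|S :\: F|) cardsID addnC.
apply: leq_trans (minS _ convS') (leq_trans (leq_card_setU _ _) _).
by rewrite leq_add2l leq_imset_card.
Qed.

End InducedCopy.

Section OrdinalCertificates.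

Variables (n : nat) (h : rel 'I_n) (hN : nat -> nat -> bool).
Hypothesis hE : forall a b : 'I_n, h a b = hN a b.
Implicit Types (A C W : {set 'I_n}).

Lemma card_ord_count (P : pred nat) : #|[set a : 'I_n | P a]| = count P (iota 0 n).
Proof.
rewrite cardsE cardE /enum_mem size_filter -enumT -val_enum_ord count_map.
by apply: eq_count => a; rewrite !inE.
Qed.

Lemma mem_iota_ord (a : 'I_n) : nat_of_ord a \in iota 0 n.
Proof. by rewrite mem_iota ltn_ord. Qed.

(* Vertex sets of ['I_n] are given as [seq nat] so that the certificates below are
   decided by evaluation; the finset operations do not compute. *)
Definition ord_set (w : seq nat) : {set 'I_n} := [set a : 'I_n | nat_of_ord a \in w].

Definition count_nbrs (w : seq nat) (x : nat) : nat :=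
  count (fun y => (y \in w) && hN x y) (iota 0 n).

Lemma card_nbrs_ord_set w (a : 'I_n) : #|nbrs h (ord_set w) a| = count_nbrs w a.
Proof.
by rewrite /count_nbrs -card_ord_count; apply: eq_card => b; rewrite !inE ?mem_iota_ord hE.
Qed.

Lemma card_adj_ord (a : 'I_n) : #|[set b | h a b]| = count_nbrs (iota 0 n) a.
Proof.
by rewrite /count_nbrs -card_ord_count; apply: eq_card => b; rewrite !inE ?mem_iota_ord hE.
Qed.

Definition core_certificate (ws : seq (seq nat)) : bool :=
  (0 < n) &&
  all (fun s => let w := nth [::] ws s in
         [&& s \notin w, has (fun a => a < n) w &
             all (fun a => (a \in w) ==> (1 < count_nbrs w a)) (iota 0 n)])
      (iota 0 n).

Lemma core_certificateP ws : core_certificate ws ->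
  forall A : {set 'I_n}, #|A| <= 1 ->
  exists2 W, W != set0 & min_deg2 h W /\ [disjoint W & A].
Proof.
case/andP=> n_gt0 /allP certW A A_le1.
have [s sA] : exists s : 'I_n, A \subset [set s].
  have [-> | [s sA]] := set_0Vmem A; first by exists (Ordinal n_gt0); apply: sub0set.
  by exists s; apply/subsetP => a aA; rewrite inE (card_le1_eqP A_le1 a s).
have /and3P[s_notin /hasP[x xw x_lt_n] deg2] := certW s (mem_iota_ord s).
exists (ord_set (nth [::] ws s)); [|split].
- by apply/set0Pn; exists (Ordinal x_lt_n); rewrite inE.
- move=> a; rewrite inE => aw; rewrite card_nbrs_ord_set.
  exact: (implyP (allP deg2 a (mem_iota_ord a))).
- apply: disjointWr sA _; rewrite disjoint_sym disjoints1 inE.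
  exact: s_notin.
Qed.

Fixpoint peeling (p : seq nat) : bool :=
  if p is x :: p' then
    (count_nbrs p x + (3 - count_nbrs (iota 0 n) x) < 2) && peeling p'
  else true.

(* Each vertex of [p] has fewer than two possible neighbours among itself and the
   vertices after it, so it cannot lie in a [cubic_min_deg2] set inside [p]. *)
Lemma peelingP p C : peeling p -> C \subset ord_set p -> cubic_min_deg2 h C -> C = set0.
Proof.
elim: p C => [|x p IHp] C /=.
  by move=> _ sC _; apply/eqP; rewrite -subset0; apply: subset_trans sC _;
     apply/subsetP => a; rewrite inE.
case/andP=> peel_x peel_p sC cC.
suff sCp : C \subset ord_set p by exact: IHp peel_p sCp cC.
apply/subsetP => a aC; have := subsetP sC a aC; rewrite !inE => /orP[/eqP ax | //].
have nbrs_le : #|nbrs h C a| <= #|nbrs h (ord_set (x :: p)) a|.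
  apply/subset_leq_card/subsetP => b; rewrite !inE => /andP[/(subsetP sC) + ->].
  by rewrite !inE andbT.
have := leq_trans (cC a aC) (leq_add nbrs_le (leqnn _)).
by rewrite card_nbrs_ord_set card_adj_ord ax leqNgt peel_x.
Qed.

Definition blocking_certificate (A p : seq nat) : bool :=
  all (fun x => (x \in A) || (x \in p)) (iota 0 n) && peeling p.

Lemma blocking_certificateP (A p : seq nat) : blocking_certificate A p ->
  forall C, [disjoint C & ord_set A] -> cubic_min_deg2 h C -> C = set0.
Proof.
case/andP=> /allP cover peel_p C dCA; apply: peelingP peel_p _.
apply/subsetP => a aC; move: (cover a (mem_iota_ord a)).
by have := disjointFr dCA aC; rewrite !inE => ->.
Qed.

End OrdinalCertificates.

Definition Hadj_nat (i x y : nat) : bool :=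
  ((x.+1, y.+1) \in Hedges i) || ((y.+1, x.+1) \in Hedges i).

(* The [s]-th list avoids vertex [s] and induces minimum degree 2 in H_i. *)
Definition H_core_witnesses (i : nat) : seq (seq nat) :=
  match i with
  | 1 => [:: [:: 1; 2; 3; 4]; [:: 2; 3; 4]; [:: 0; 1; 3; 4]; [:: 0; 1; 2; 4];
             [:: 1; 2; 3]]
  | 2 => [:: [:: 1; 2; 3; 4; 5]; [:: 2; 3; 4; 5]; [:: 0; 1; 4; 5];
             [:: 0; 1; 2; 4; 5]; [:: 0; 1; 2; 5]; [:: 1; 2; 3; 4]]
  | 3 => [:: [:: 1; 2; 3; 4; 5; 6]; [:: 2; 3; 4; 5; 6]; [:: 0; 1; 3; 4; 5; 6];
             [:: 0; 1; 2; 4; 5; 6]; [:: 0; 1; 2; 3; 5; 6]; [:: 0; 1; 2; 3; 4; 6];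
             [:: 1; 2; 3; 4; 5]]
  | 4 => [:: [:: 1; 2; 3; 4; 5]; [:: 2; 3; 4]; [:: 0; 1; 5]; [:: 0; 1; 2; 4; 5];
             [:: 0; 1; 5]; [:: 2; 3; 4]]
  | _ => [::]
  end.

Definition H_blocking_pair (i : nat) : seq nat :=
  match i with
  | 3 => [:: 1; 3]
  | _ => [:: 0; 2]
  end.

Definition H_peeling_order (i : nat) : seq nat :=
  match i with
  | 1 => [:: 1; 3; 4]
  | 2 | 4 => [:: 1; 5; 4; 3]
  | 3 => [:: 2; 4; 5; 6; 0]
  | _ => [::]
  end.

Lemma H_avoiding_cores i : 1 <= i <= 4 ->
  forall A : {set 'I_(Hn i)}, #|A| <= 1 ->
  exists2 W, W != set0 & min_deg2 (@Hadj i) W /\ [disjoint W & A].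
Proof.
move=> i_range.
apply: (@core_certificateP _ _ (Hadj_nat i) (fun _ _ => erefl) (H_core_witnesses i)).
by case: i i_range => [|[|[|[|[|i]]]]] // _; vm_compute.
Qed.

Lemma H_blocking i : 1 <= i <= 4 ->
  exists2 A : {set 'I_(Hn i)}, #|A| = 2 &
  forall C : {set 'I_(Hn i)}, [disjoint C & A] -> cubic_min_deg2 (@Hadj i) C -> C = set0.
Proof.
move=> i_range; exists (ord_set (Hn i) (H_blocking_pair i)).
  by rewrite card_ord_count; case: i i_range => [|[|[|[|[|i]]]]].
apply: (@blocking_certificateP _ _ (Hadj_nat i) (fun _ _ => erefl) _ (H_peeling_order i)).
by case: i i_range => [|[|[|[|[|i]]]]] // _; vm_compute.
Qed.

Theorem lemma5p5 (T : finType) (e : rel T) (i : nat) :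
  simple_graph e -> cubic e -> 1 <= i <= 4 ->
  forall f : 'I_(Hn i) -> T, induced_copy e f ->
  forall S : {set T}, is_min_conversion_set e S ->
  #|S :&: [set f a | a : 'I_(Hn i)]| = 2.
Proof.
move=> _ e_cubic i_range f [f_inj f_induced] S minS.
have [A cardA blockA] := H_blocking i_range.
apply/eqP; rewrite eqn_leq -{1}cardA.
rewrite (card_min_conversion_copy_le e_cubic f_inj f_induced blockA minS) /=.
exact: (card_conversion_copy_gt e_cubic f_inj f_induced (H_avoiding_cores i_range)
                                 (proj1 minS)).
Qed.
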